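(* (1) For every packed word $g$, $g\leq\mathrm{Std}(g)$. (2) If $f,g$ are packed words with $f\leq g$, then $\mathrm{Std}(f)=\mathrm{Std}(g)$.
   Context: $[n]=\{1,\ldots,n\}$. A packed word of length $n$ is a word $f=f(1)\ldots f(n)$ of positive integers with $\{f(1),\ldots,f(n)\}=[\max f]$. For packed words $f,g$ of the same length $n$, $g\leq f$ means: for all $i,j\in[n]$, $f(i)\leq f(j)\Rightarrow g(i)\leq g(j)$; $f(i)>f(j)$ and $i<j\Rightarrow g(i)>g(j)$; $f(i)=f(j)\Rightarrow g(i)=g(j)$. The standardization $\mathrm{Std}(f)$ of a packed word $f$ of length $n$ is the unique permutation $\sigma$ of $[n]$ (viewed as the packed word $\sigma(1)\ldots\sigma(n)$) such that for all $i,j$: $f(i)<f(j)\Rightarrow\sigma(i)<\sigma(j)$, and ($f(i)=f(j)$ and $i<j$) $\Rightarrow\sigma(i)<\sigma(j)$. *)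

From mathcomp Require Import all_boot.
Set Implicit Arguments. Unset Strict Implicit. Unset Printing Implicit Defensive.

(* Words are seq nat; position i in [n] (1-based in the paper) is index i-1,
   i.e. f(i) = nth 0 f (i-1).  We use 0-based indices i < size f. *)

Definition wmax (f : seq nat) : nat := \max_(x <- f) x.

Definition packed (f : seq nat) : Prop :=
  forall k : nat, (k \in f) = (1 <= k <= wmax f).

Definition pw_le (g f : seq nat) : Prop :=
  size g = size f /\
  forall i j : nat, i < size f -> j < size f ->
    [/\ nth 0 f i <= nth 0 f j -> nth 0 g i <= nth 0 g j,
        nth 0 f i > nth 0 f j -> i < j -> nth 0 g i > nth 0 g j &
        nth 0 f i = nth 0 f j -> nth 0 g i = nth 0 g j].

Definition is_perm_word (n : nat) (s : seq nat) : Prop := perm_eq s (iota 1 n).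

Definition is_std (f s : seq nat) : Prop :=
  is_perm_word (size f) s /\
  forall i j : nat, i < size f -> j < size f ->
    (nth 0 f i < nth 0 f j -> nth 0 s i < nth 0 s j) /\
    (nth 0 f i = nth 0 f j -> i < j -> nth 0 s i < nth 0 s j).

From mathcomp Require Import all_boot.
From mathcomp Require Import zify.

Set Implicit Arguments.
Unset Strict Implicit.
Unset Printing Implicit Defensive.

(* Std(f) is the rank function of the positions of f under the strict total
   order "smaller letter first, ties broken from left to right".  A
   permutation of [n] is determined by the order it induces on positions, so
   (1) is a reading of this order, and (2) follows because f <= g forces the
   orders induced by f and g to coincide. *)

Lemma count_iota_ltn m n j : j <= n -> count (fun i => i < m + j) (iota m n) = j.
Proof. by move=> le_jn; rewrite -size_filter filter_iota_ltn ?size_iota. Qed.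

Lemma perm_iota_rank n (u : seq nat) i : perm_eq u (iota 1 n) -> i < size u ->
  nth 0 u i = (count (fun j => nth 0 u j < nth 0 u i) (iota 0 (size u))).+1.
Proof.
move=> pu lt_i.
have : nth 0 u i \in iota 1 n by rewrite -(perm_mem pu) mem_nth.
rewrite mem_iota => /andP[ui_gt0 ui_le].
rewrite -(count_map (nth 0 u) (fun x => x < nth 0 u i)) map_nth_iota0 // take_size.
have {2}-> : nth 0 u i = 1 + (nth 0 u i).-1 by lia.
by rewrite (permP pu) count_iota_ltn; lia.
Qed.

Lemma perm_iota_inj_order n (s t : seq nat) :
  perm_eq s (iota 1 n) -> perm_eq t (iota 1 n) ->
  (forall i j, i < n -> j < n -> (nth 0 s i < nth 0 s j) = (nth 0 t i < nth 0 t j)) ->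
  s = t.
Proof.
move=> ps pt same_order.
have size_s : size s = n by rewrite (perm_size ps) size_iota.
have size_t : size t = n by rewrite (perm_size pt) size_iota.
apply: (@eq_from_nth _ 0); rewrite size_s ?size_t // => i lt_in.
rewrite (perm_iota_rank ps) ?size_s // (perm_iota_rank pt) ?size_t //; congr _.+1.
by apply: eq_in_count => j; rewrite mem_iota => /andP[_ lt_jn] /=; apply: same_order.
Qed.

Definition std_lt (f : seq nat) (i j : nat) : bool :=
  (nth 0 f i < nth 0 f j) || (nth 0 f i == nth 0 f j) && (i < j).

Lemma std_lt_total f i j : i != j -> std_lt f i j = ~~ std_lt f j i.
Proof. rewrite /std_lt; lia. Qed.

Lemma std_ltxx f i : std_lt f i i = false.
Proof. by rewrite /std_lt !ltnn andbF. Qed.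

Lemma is_std_ltE f s i j : is_std f s -> i < size f -> j < size f ->
  (nth 0 s i < nth 0 s j) = std_lt f i j.
Proof.
move=> [_ std_s].
have std_lt_lt k l : k < size f -> l < size f -> std_lt f k l -> nth 0 s k < nth 0 s l.
  move=> lt_k lt_l /orP[lt_kl | /andP[/eqP eq_kl lt_kl]]; first exact: (std_s k l lt_k lt_l).1.
  exact: (std_s k l lt_k lt_l).2.
move=> lt_i lt_j; have [-> | ne_ij] := eqVneq i j; first by rewrite ltnn std_ltxx.
apply/idP/idP; last exact: std_lt_lt.
apply: contraLR; rewrite std_lt_total // negbK => lt_ji.
by rewrite -leqNgt ltnW // std_lt_lt.
Qed.

Lemma is_std_pw_le g s : is_std g s -> pw_le g s.
Proof.
move=> std_s; have size_s : size s = size g by rewrite (perm_size std_s.1) size_iota.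
split=> // i j; rewrite size_s => lt_i lt_j.
have lt_ij := is_std_ltE std_s lt_i lt_j; have lt_ji := is_std_ltE std_s lt_j lt_i.
rewrite /std_lt in lt_ij lt_ji.
split; lia.
Qed.

Lemma pw_le_std_lt f g i j : pw_le f g -> i < size g -> j < size g ->
  std_lt f i j = std_lt g i j.
Proof.
move=> [_ le_fg] lt_i lt_j; have [-> | ne_ij] := eqVneq i j; first by rewrite !std_ltxx.
have le_lt k l : k != l -> k < size g -> l < size g -> std_lt g k l -> std_lt f k l.
  move=> ne_kl lt_k lt_l; have [le1 lt1 eq1] := le_fg k l lt_k lt_l.
  have [le2 lt2 _] := le_fg l k lt_l lt_k.
  rewrite /std_lt; lia.
apply/idP/idP; last exact: le_lt.
apply: contraLR; rewrite [std_lt g _ _]std_lt_total // [std_lt f _ _]std_lt_total //.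
by rewrite !negbK; apply: le_lt; rewrite // eq_sym.
Qed.

Theorem lemma24 :
  (forall g s : seq nat, packed g -> is_std g s -> pw_le g s) /\
  (forall f g sf sg : seq nat, packed f -> packed g -> size f = size g ->
     pw_le f g -> is_std f sf -> is_std g sg -> sf = sg).
Proof.
split=> [g s _ | f g sf sg _ _ size_fg le_fg std_f std_g]; first exact: is_std_pw_le.
apply: (@perm_iota_inj_order (size g)) => [||i j lt_i lt_j].
- by rewrite -size_fg; exact: std_f.1.
- exact: std_g.1.
rewrite (is_std_ltE std_f) ?size_fg // (is_std_ltE std_g) //.
exact: pw_le_std_lt.
Qed.
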